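(* Let $\beta>\alpha>0$ and let $q=(q_1,q_2,q_3,q_4)\in(\mathbb{R}^2)^4$ be a convex non-collinear central configuration of the planar Newtonian 4-body problem with masses $m_1=m_2=\beta$, $m_3=m_4=\alpha$, the vertices being labelled so that $q_1,q_2,q_3,q_4$ is the cyclic order around the convex quadrilateral (so the equal masses occupy adjacent vertices). If $r_{14}=r_{23}$, then the configuration is symmetric and forms an isosceles trapezoid: the side $q_1q_2$ is parallel to the side $q_3q_4$ (and $r_{14}=r_{23}$).
   Context: Bodies have positions $q_i\in\mathbb{R}^2$ and masses $m_i>0$, $i=1,\dots,4$; $r_{ij}=\|q_i-q_j\|$. The Newtonian potential is $U(q)=\sum_{i<j}m_im_j/r_{ij}$ (gravitational constant $1$). A configuration $q$ with $q_i\neq q_j$ for all $i\neq j$ and center of mass $\sum_i m_iq_i=0$ is a central configuration if there is a constant $\lambda$ with $\frac{1}{m_i}\frac{\partial U}{\partial q_i}=\lambda q_i$ for all $i$, i.e. $\sum_{j\neq i} m_j\frac{q_j-q_i}{r_{ij}^3}=\lambda q_i$. ''Convex non-collinear'' means the four points are the vertices of a strictly convex quadrilateral (no three of them collinear). *)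

From Stdlib Require Import Reals List.
Import ListNotations.
Open Scope R_scope.

Definition pt := (R * R)%type.

Definition rdist (p q : pt) : R :=
  sqrt ((fst p - fst q)^2 + (snd p - snd q)^2).

Definition turn (a b c : pt) : R :=
  (fst b - fst a) * (snd c - snd b) - (snd b - snd a) * (fst c - fst b).

Definition idx : list nat := [1%nat; 2%nat; 3%nat; 4%nat].

Definition sumR (f : nat -> R) (l : list nat) : R :=
  fold_right (fun i acc => f i + acc) 0 l.

Definition central_configuration (m : nat -> R) (q : nat -> pt) : Prop :=
  (forall i j, In i idx -> In j idx -> i <> j -> q i <> q j) /\
  sumR (fun i => m i * fst (q i)) idx = 0 /\
  sumR (fun i => m i * snd (q i)) idx = 0 /\
  exists lambda : R, forall i, In i idx ->
    sumR (fun j => if Nat.eqb j i then 0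
                   else m j * (fst (q j) - fst (q i)) / (rdist (q i) (q j))^3) idx
      = lambda * fst (q i) /\
    sumR (fun j => if Nat.eqb j i then 0
                   else m j * (snd (q j) - snd (q i)) / (rdist (q i) (q j))^3) idx
      = lambda * snd (q i).

(* q1,q2,q3,q4 are, in this cyclic order, the vertices of a strictly convex
   quadrilateral (no three collinear): all consecutive turns strictly of the same sign. *)
Definition convex_cyclic (q : nat -> pt) : Prop :=
  (0 < turn (q 1%nat) (q 2%nat) (q 3%nat) /\ 0 < turn (q 2%nat) (q 3%nat) (q 4%nat) /\
   0 < turn (q 3%nat) (q 4%nat) (q 1%nat) /\ 0 < turn (q 4%nat) (q 1%nat) (q 2%nat)) \/
  (turn (q 1%nat) (q 2%nat) (q 3%nat) < 0 /\ turn (q 2%nat) (q 3%nat) (q 4%nat) < 0 /\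
   turn (q 3%nat) (q 4%nat) (q 1%nat) < 0 /\ turn (q 4%nat) (q 1%nat) (q 2%nat) < 0).

Definition parallel (a b c d : pt) : Prop :=
  (fst b - fst a) * (snd d - snd c) - (snd b - snd a) * (fst d - fst c) = 0.

(* Mirror symmetry exchanging q1 <-> q2 and q3 <-> q4: the segments q1q2 and q3q4
   are parallel and have a common perpendicular bisector (the line joining
   their midpoints is perpendicular to q1q2). *)
Definition symmetric_isosceles_trapezoid (q : nat -> pt) : Prop :=
  parallel (q 1%nat) (q 2%nat) (q 3%nat) (q 4%nat) /\
  ((fst (q 1%nat) + fst (q 2%nat)) / 2 - (fst (q 3%nat) + fst (q 4%nat)) / 2)
     * (fst (q 2%nat) - fst (q 1%nat)) +
  ((snd (q 1%nat) + snd (q 2%nat)) / 2 - (snd (q 3%nat) + snd (q 4%nat)) / 2)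
     * (snd (q 2%nat) - snd (q 1%nat)) = 0.

From Stdlib Require Import Reals List Lra Psatz.
Open Scope R_scope.

(* With mu = lambda / (total mass) the central configuration equations read
   sum_j m_j (r_ij^-3 + mu) (q_j - q_i) = 0, and crossing them with edge vectors
   ties these weights to the oriented areas of the four triangles.  Let s be the
   common weight of the two legs q1q4 and q2q3.  If s = 0, all six weights vanish,
   so the four points would be pairwise equidistant, which is impossible in the
   plane.  If s <> 0, two area relations give [234][123] = [341][412], where [ijk]
   is the oriented area of q_i q_j q_k; for a convex quadrilateral this means
   q1q2 // q3q4.  Equal legs then make it an isosceles
   trapezoid unless it is a parallelogram, and for a parallelogram the area
   relations give (beta^2 - alpha^2) s = 0. *)

Lemma rdist_sym (p p' : pt) : rdist p p' = rdist p' p.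
Proof. unfold rdist; f_equal; ring. Qed.

Lemma rdist_sqr (p p' : pt) : rdist p p' ^ 2 = (fst p - fst p') ^ 2 + (snd p - snd p') ^ 2.
Proof.
  unfold rdist; rewrite pow2_sqrt; [reflexivity|].
  apply Rplus_le_le_0_compat; apply pow2_ge_0.
Qed.

Lemma turn_rot (a b c : pt) : turn a b c = turn b c a.
Proof. unfold turn; ring. Qed.

Lemma rdist_pos_of_turn (a b c : pt) : turn a b c <> 0 -> 0 < rdist a b.
Proof.
  intros ht; unfold rdist; apply sqrt_lt_R0.
  destruct (Rle_lt_dec ((fst a - fst b) ^ 2 + (snd a - snd b) ^ 2) 0) as [h|h]; [|exact h].
  exfalso; apply ht.
  assert (h0 : (fst a - fst b) * (fst a - fst b) + (snd a - snd b) * (snd a - snd b) = 0)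
    by (pose proof (pow2_ge_0 (fst a - fst b)); pose proof (pow2_ge_0 (snd a - snd b)); nra).
  destruct (Rplus_sqr_eq_0 _ _ h0) as [ex ey].
  unfold turn; replace (fst b) with (fst a) by lra; replace (snd b) with (snd a) by lra; ring.
Qed.

Lemma no_four_equidistant_points (a b c d : pt) (r : R) :
  0 < r -> rdist a b = r -> rdist a c = r -> rdist a d = r ->
  rdist b c = r -> rdist b d = r -> rdist c d = r -> False.
Proof.
  intros hr hab hac had hbc hbd hcd.
  assert (sq : forall p p', rdist p p' = r -> (fst p - fst p') ^ 2 + (snd p - snd p') ^ 2 = r ^ 2)
    by (intros p p' e; rewrite <- rdist_sqr, e; reflexivity).
  apply sq in hab, hac, had, hbc, hbd, hcd.
  set (dab := (fst a - fst b) ^ 2 + (snd a - snd b) ^ 2) in *.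
  set (dac := (fst a - fst c) ^ 2 + (snd a - snd c) ^ 2) in *.
  set (dad := (fst a - fst d) ^ 2 + (snd a - snd d) ^ 2) in *.
  set (dbc := (fst b - fst c) ^ 2 + (snd b - snd c) ^ 2) in *.
  set (dbd := (fst b - fst d) ^ 2 + (snd b - snd d) ^ 2) in *.
  set (dcd := (fst c - fst d) ^ 2 + (snd c - snd d) ^ 2) in *.
  (* The Gram determinant of b - a, c - a, d - a vanishes for plane vectors,
     but with all six distances equal to r it is r^6 / 2. *)
  assert (gram : let bc := (dab + dac - dbc) / 2 in
                 let bd := (dab + dad - dbd) / 2 in
                 let cd := (dac + dad - dcd) / 2 in
    dab * (dac * dad - cd * cd) - bc * (bc * dad - cd * bd) + bd * (bc * cd - dac * bd) = 0)
    by (unfold dab, dac, dad, dbc, dbd, dcd; field).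
  cbv zeta in gram; rewrite hab, hac, had, hbc, hbd, hcd in gram.
  assert (0 < r ^ 6) by (apply pow_lt; exact hr).
  nra.
Qed.

Lemma parallel_of_turn_products (a b c d : pt) :
  turn b c d * turn a b c = turn c d a * turn d a b ->
  turn b c d + turn d a b <> 0 -> parallel a b c d.
Proof.
  intros hprod hsum; unfold parallel.
  assert (E : turn b c d * turn a b c - turn c d a * turn d a b =
    - ((fst b - fst a) * (snd d - snd c) - (snd b - snd a) * (fst d - fst c))
    * (turn b c d + turn d a b)) by (unfold turn; ring).
  rewrite hprod, Rminus_diag in E.
  symmetry in E; apply Rmult_integral in E as [E|E]; [lra | contradiction].
Qed.

Definition parallelogram (a b c d : pt) : Prop :=
  fst b - fst a = fst c - fst d /\ snd b - snd a = snd c - snd d.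

Lemma parallelogram_rdist (a b c d : pt) :
  parallelogram a b c d -> rdist a b = rdist c d.
Proof.
  intros [hx hy]; unfold rdist; f_equal.
  replace (fst a - fst b) with (fst d - fst c) by lra.
  replace (snd a - snd b) with (snd d - snd c) by lra; ring.
Qed.

Lemma parallelogram_turns (a b c d : pt) :
  parallelogram a b c d ->
  turn b c d = turn a b c /\ turn c d a = turn a b c /\ turn d a b = turn a b c.
Proof.
  intros [hx hy]; unfold turn.
  replace (fst d) with (fst c - fst b + fst a) by lra.
  replace (snd d) with (snd c - snd b + snd a) by lra.
  repeat split; ring.
Qed.

Lemma isosceles_trapezoid_of_parallel (q : nat -> pt) :
  parallel (q 1%nat) (q 2%nat) (q 3%nat) (q 4%nat) ->
  rdist (q 1%nat) (q 4%nat) = rdist (q 2%nat) (q 3%nat) ->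
  ~ parallelogram (q 1%nat) (q 2%nat) (q 3%nat) (q 4%nat) ->
  symmetric_isosceles_trapezoid q.
Proof.
  intros hpar hlegs hnot; split; [exact hpar|].
  unfold parallel in hpar; unfold parallelogram in hnot.
  set (a := q 1%nat) in *; set (b := q 2%nat) in *; set (c := q 3%nat) in *; set (d := q 4%nat) in *.
  assert (hsq : (fst a - fst d) ^ 2 + (snd a - snd d) ^ 2 = (fst b - fst c) ^ 2 + (snd b - snd c) ^ 2)
    by (rewrite <- !rdist_sqr, hlegs; reflexivity).
  set (zx := fst d - fst a - (fst c - fst b)); set (zy := snd d - snd a - (snd c - snd b)).
  assert (hz : zx * zx + zy * zy <> 0).
  { intros h; apply hnot; destruct (Rplus_sqr_eq_0 _ _ h); unfold zx, zy in *; split; lra. }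
  (* (u.p)|z|^2 = (u.z)(z.p) + (u x z)(p x z) for u = b - a, z = (d - a) - (c - b),
     p = (d - a) + (c - b); here z.p = |ad|^2 - |bc|^2 and u x z = u x (d - c). *)
  assert (E : (((fst a + fst b) / 2 - (fst c + fst d) / 2) * (fst b - fst a)
            + ((snd a + snd b) / 2 - (snd c + snd d) / 2) * (snd b - snd a)) * (zx * zx + zy * zy)
    = - / 2 * (((fst b - fst a) * zx + (snd b - snd a) * zy)
                * ((fst a - fst d) ^ 2 + (snd a - snd d) ^ 2 - ((fst b - fst c) ^ 2 + (snd b - snd c) ^ 2))
              + ((fst b - fst a) * (snd d - snd c) - (snd b - snd a) * (fst d - fst c))
                * ((fst d - fst a + (fst c - fst b)) * zy - (snd d - snd a + (snd c - snd b)) * zx)))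
    by (unfold zx, zy; field).
  rewrite hsq, hpar, Rminus_diag, Rmult_0_r, Rmult_0_l, Rplus_0_l, Rmult_0_r in E.
  apply Rmult_integral in E as [E|E]; [exact E | contradiction].
Qed.

Lemma convex_cyclic_turns (q : nat -> pt) :
  convex_cyclic q ->
  turn (q 1%nat) (q 2%nat) (q 3%nat) <> 0 /\ turn (q 2%nat) (q 3%nat) (q 4%nat) <> 0 /\
  turn (q 3%nat) (q 4%nat) (q 1%nat) <> 0 /\
  turn (q 2%nat) (q 3%nat) (q 4%nat) + turn (q 4%nat) (q 1%nat) (q 2%nat) <> 0.
Proof. intros [h|h]; repeat split; lra. Qed.

Definition balanced (o : pt) (c1 c2 c3 : R) (p1 p2 p3 : pt) : Prop :=
  c1 * (fst p1 - fst o) + c2 * (fst p2 - fst o) + c3 * (fst p3 - fst o) = 0 /\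
  c1 * (snd p1 - snd o) + c2 * (snd p2 - snd o) + c3 * (snd p3 - snd o) = 0.

Lemma balanced_rot (o : pt) (c1 c2 c3 : R) (p1 p2 p3 : pt) :
  balanced o c1 c2 c3 p1 p2 p3 -> balanced o c2 c3 c1 p2 p3 p1.
Proof. unfold balanced; lra. Qed.

Lemma balanced_turn (o : pt) (c1 c2 c3 : R) (p1 p2 p3 : pt) :
  balanced o c1 c2 c3 p1 p2 p3 -> c2 * turn o p1 p2 = c3 * turn o p3 p1.
Proof.
  intros [hx hy].
  assert (E : c2 * turn o p1 p2 - c3 * turn o p3 p1 =
    (fst p1 - fst o) * (c1 * (snd p1 - snd o) + c2 * (snd p2 - snd o) + c3 * (snd p3 - snd o))
    - (snd p1 - snd o) * (c1 * (fst p1 - fst o) + c2 * (fst p2 - fst o) + c3 * (fst p3 - fst o)))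
    by (unfold turn; ring).
  rewrite hx, hy in E; lra.
Qed.

Lemma sumR_balance_split (m d x : nat -> R) (mu : R) (i : nat) (l : list nat) :
  sumR (fun j => m j * (/ d j ^ 3 + mu) * (x j - x i)) l =
  sumR (fun j => if Nat.eqb j i then 0 else m j * (x j - x i) / d j ^ 3) l
  + mu * (sumR (fun j => m j * x j) l - x i * sumR m l).
Proof.
  unfold sumR; induction l as [|j l IH]; cbn [fold_right]; [ring|].
  rewrite IH; destruct (Nat.eqb_spec j i) as [->|_]; unfold Rdiv; ring.
Qed.

Definition cc_weight (mu : R) (p p' : pt) : R := / rdist p p' ^ 3 + mu.

(* The [j = i] term carries the junk weight [/ 0 + mu], but a zero factor. *)
Lemma central_configuration_balance (m : nat -> R) (q : nat -> pt) :
  central_configuration m q -> sumR m idx <> 0 ->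
  exists mu, forall i, In i idx ->
    sumR (fun j => m j * cc_weight mu (q i) (q j) * (fst (q j) - fst (q i))) idx = 0 /\
    sumR (fun j => m j * cc_weight mu (q i) (q j) * (snd (q j) - snd (q i))) idx = 0.
Proof.
  intros (_ & hx & hy & lam & hcc) hM.
  exists (lam / sumR m idx); intros i hi; destruct (hcc i hi) as [ex ey].
  unfold cc_weight.
  rewrite (sumR_balance_split m (fun j => rdist (q i) (q j)) (fun j => fst (q j))),
    (sumR_balance_split m (fun j => rdist (q i) (q j)) (fun j => snd (q j))).
  rewrite ex, ey, hx, hy; split; field; exact hM.
Qed.

Lemma rdist_eq_of_cc_weight_eq (mu : R) (a b c d : pt) :
  0 < rdist a b -> 0 < rdist c d ->
  cc_weight mu a b = cc_weight mu c d -> rdist a b = rdist c d.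
Proof.
  unfold cc_weight; intros hab hcd e.
  assert (e3 : rdist a b ^ 3 = rdist c d ^ 3) by (apply Rinv_eq_reg; lra).
  assert (F : (rdist a b - rdist c d)
              * (rdist a b ^ 2 + rdist a b * rdist c d + rdist c d ^ 2) = 0)
    by (transitivity (rdist a b ^ 3 - rdist c d ^ 3); [ring | lra]).
  apply Rmult_integral in F as [F|F]; [lra | nra].
Qed.

Lemma two_pair_balance (alpha beta : R) (m : nat -> R) (q : nat -> pt) :
  0 < alpha -> 0 < beta ->
  m 1%nat = beta -> m 2%nat = beta -> m 3%nat = alpha -> m 4%nat = alpha ->
  central_configuration m q ->
  exists mu,
    balanced (q 1%nat) (beta * cc_weight mu (q 1%nat) (q 2%nat))
      (alpha * cc_weight mu (q 1%nat) (q 3%nat)) (alpha * cc_weight mu (q 1%nat) (q 4%nat))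
      (q 2%nat) (q 3%nat) (q 4%nat) /\
    balanced (q 2%nat) (beta * cc_weight mu (q 1%nat) (q 2%nat))
      (alpha * cc_weight mu (q 2%nat) (q 3%nat)) (alpha * cc_weight mu (q 2%nat) (q 4%nat))
      (q 1%nat) (q 3%nat) (q 4%nat) /\
    balanced (q 3%nat) (beta * cc_weight mu (q 1%nat) (q 3%nat))
      (beta * cc_weight mu (q 2%nat) (q 3%nat)) (alpha * cc_weight mu (q 3%nat) (q 4%nat))
      (q 1%nat) (q 2%nat) (q 4%nat) /\
    balanced (q 4%nat) (beta * cc_weight mu (q 1%nat) (q 4%nat))
      (beta * cc_weight mu (q 2%nat) (q 4%nat)) (alpha * cc_weight mu (q 3%nat) (q 4%nat))
      (q 1%nat) (q 2%nat) (q 3%nat).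
Proof.
  intros ha hb h1 h2 h3 h4 hcc.
  assert (hM : sumR m idx <> 0) by (cbn; lra).
  destruct (central_configuration_balance m q hcc hM) as [mu hmu]; exists mu.
  unfold balanced.
  destruct (hmu 1%nat) as [e1x e1y]; [cbn; tauto|].
  destruct (hmu 2%nat) as [e2x e2y]; [cbn; tauto|].
  destruct (hmu 3%nat) as [e3x e3y]; [cbn; tauto|].
  destruct (hmu 4%nat) as [e4x e4y]; [cbn; tauto|].
  unfold cc_weight, sumR, idx in *; cbn [fold_right] in *.
  rewrite h1, h2, h3, h4 in *.
  rewrite (rdist_sym (q 2%nat) (q 1%nat)), (rdist_sym (q 3%nat) (q 1%nat)),
    (rdist_sym (q 4%nat) (q 1%nat)), (rdist_sym (q 3%nat) (q 2%nat)),
    (rdist_sym (q 4%nat) (q 2%nat)), (rdist_sym (q 4%nat) (q 3%nat)) in *.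
  repeat split; lra.
Qed.

Lemma Rmult_eq_0_middle (c x t : R) : c <> 0 -> t <> 0 -> c * x * t = 0 -> x = 0.
Proof.
  intros hc ht e; apply Rmult_integral in e as [e|e]; [|contradiction].
  apply Rmult_integral in e as [e|e]; [contradiction | exact e].
Qed.

Section TwoPairConfiguration.

Variables (alpha beta mu : R) (q : nat -> pt).
Local Notation q1 := (q 1%nat).
Local Notation q2 := (q 2%nat).
Local Notation q3 := (q 3%nat).
Local Notation q4 := (q 4%nat).
Local Notation w := (cc_weight mu).

Hypotheses (halpha : 0 < alpha) (halpha_beta : alpha < beta).
Hypothesis balance1 :
  balanced q1 (beta * w q1 q2) (alpha * w q1 q3) (alpha * w q1 q4) q2 q3 q4.
Hypothesis balance2 :
  balanced q2 (beta * w q1 q2) (alpha * w q2 q3) (alpha * w q2 q4) q1 q3 q4.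
Hypothesis balance3 :
  balanced q3 (beta * w q1 q3) (beta * w q2 q3) (alpha * w q3 q4) q1 q2 q4.
Hypothesis balance4 :
  balanced q4 (beta * w q1 q4) (beta * w q2 q4) (alpha * w q3 q4) q1 q2 q3.
Hypothesis hconv : convex_cyclic q.
Hypothesis hlegs : rdist q1 q4 = rdist q2 q3.

Lemma area_relations :
  beta * w q1 q2 * turn q1 q2 q3 = alpha * w q1 q4 * turn q3 q4 q1 /\
  alpha * w q1 q3 * turn q1 q2 q3 = - (alpha * w q1 q4 * turn q4 q1 q2) /\
  beta * w q1 q2 * turn q4 q1 q2 = alpha * w q2 q3 * turn q2 q3 q4 /\
  beta * w q1 q2 * turn q1 q2 q3 = - (alpha * w q2 q4 * turn q2 q3 q4) /\
  beta * w q1 q3 * turn q1 q2 q3 = - (alpha * w q3 q4 * turn q2 q3 q4) /\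
  beta * w q1 q4 * turn q4 q1 q2 = alpha * w q3 q4 * turn q2 q3 q4.
Proof.
  pose proof (balanced_turn _ _ _ _ _ _ _ balance1) as r1.
  pose proof (balanced_turn _ _ _ _ _ _ _ (balanced_rot _ _ _ _ _ _ _ balance1)) as r1'.
  pose proof (balanced_turn _ _ _ _ _ _ _ (balanced_rot _ _ _ _ _ _ _ balance2)) as r2'.
  pose proof (balanced_turn _ _ _ _ _ _ _
    (balanced_rot _ _ _ _ _ _ _ (balanced_rot _ _ _ _ _ _ _ balance2))) as r2''.
  pose proof (balanced_turn _ _ _ _ _ _ _ (balanced_rot _ _ _ _ _ _ _ balance3)) as r3'.
  pose proof (balanced_turn _ _ _ _ _ _ _ (balanced_rot _ _ _ _ _ _ _ balance4)) as r4'.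
  unfold turn in *; repeat split; lra.
Qed.

Lemma cc_weight_legs_nonzero : w q1 q4 <> 0.
Proof.
  intros s0.
  destruct area_relations as (e1 & e2 & _ & e4 & e5 & _).
  destruct (convex_cyclic_turns q hconv) as (t123 & t234 & t341 & _).
  assert (hb : beta <> 0) by lra; assert (ha : alpha <> 0) by lra.
  rewrite s0 in e1, e2.
  assert (w12 : w q1 q2 = 0) by (apply (Rmult_eq_0_middle beta _ (turn q1 q2 q3)); lra).
  assert (w13 : w q1 q3 = 0) by (apply (Rmult_eq_0_middle alpha _ (turn q1 q2 q3)); lra).
  rewrite w12 in e4; rewrite w13 in e5.
  assert (w24 : w q2 q4 = 0) by (apply (Rmult_eq_0_middle alpha _ (turn q2 q3 q4)); lra).
  assert (w34 : w q3 q4 = 0) by (apply (Rmult_eq_0_middle alpha _ (turn q2 q3 q4)); lra).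
  assert (w23 : w q2 q3 = 0) by (rewrite <- s0; unfold cc_weight; rewrite hlegs; reflexivity).
  assert (p12 := rdist_pos_of_turn _ _ _ t123).
  rewrite turn_rot in t123; assert (p23 := rdist_pos_of_turn _ _ _ t123).
  rewrite turn_rot in t341; assert (p41 := rdist_pos_of_turn _ _ _ t341).
  rewrite turn_rot in t341; assert (p13 := rdist_pos_of_turn _ _ _ t341).
  rewrite turn_rot in t234; assert (p34 := rdist_pos_of_turn _ _ _ t234).
  rewrite turn_rot in t234; assert (p42 := rdist_pos_of_turn _ _ _ t234).
  rewrite rdist_sym in p41, p42.
  apply (no_four_equidistant_points q1 q2 q3 q4 (rdist q1 q2) p12); [reflexivity | ..];
    apply rdist_eq_of_cc_weight_eq with mu; auto; congruence.
Qed.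

Lemma legs_parallel : parallel q1 q2 q3 q4.
Proof.
  destruct area_relations as (e1 & _ & e3 & _).
  destruct (convex_cyclic_turns q hconv) as (_ & _ & _ & hsum).
  assert (w23 : w q2 q3 = w q1 q4) by (unfold cc_weight; rewrite hlegs; reflexivity).
  rewrite w23 in e3.
  apply parallel_of_turn_products; [|exact hsum].
  assert (E : alpha * w q1 q4 * (turn q2 q3 q4 * turn q1 q2 q3 - turn q3 q4 q1 * turn q4 q1 q2) = 0).
  { transitivity (turn q1 q2 q3 * (alpha * w q1 q4 * turn q2 q3 q4 - beta * w q1 q2 * turn q4 q1 q2)
                  - turn q4 q1 q2 * (alpha * w q1 q4 * turn q3 q4 q1 - beta * w q1 q2 * turn q1 q2 q3));
      [ring | rewrite e1, e3; ring]. }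
  apply Rmult_integral in E as [E|E]; [|lra].
  apply Rmult_integral in E as [E|E]; [lra | contradiction (cc_weight_legs_nonzero E)].
Qed.

Lemma legs_not_parallelogram : ~ parallelogram q1 q2 q3 q4.
Proof.
  intros hp.
  destruct area_relations as (e1 & _ & _ & _ & _ & e6).
  destruct (parallelogram_turns _ _ _ _ hp) as (t234 & t341 & t412).
  destruct (convex_cyclic_turns q hconv) as (t123 & _).
  assert (w34 : w q3 q4 = w q1 q2)
    by (unfold cc_weight; rewrite (parallelogram_rdist _ _ _ _ hp); reflexivity).
  rewrite t341 in e1; rewrite t234, t412, w34 in e6.
  assert (f1 : beta * w q1 q2 = alpha * w q1 q4) by (apply (Rmult_eq_reg_r (turn q1 q2 q3)); lra).
  assert (f6 : beta * w q1 q4 = alpha * w q1 q2) by (apply (Rmult_eq_reg_r (turn q1 q2 q3)); lra).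
  assert (E : (beta ^ 2 - alpha ^ 2) * w q1 q4 = 0).
  { transitivity (beta * (beta * w q1 q4) - alpha * (alpha * w q1 q4)); [ring|].
    rewrite f6, <- f1; ring. }
  apply Rmult_integral in E as [E|E]; [nra | exact (cc_weight_legs_nonzero E)].
Qed.

End TwoPairConfiguration.

Theorem theorem1p2 (alpha beta : R) (m : nat -> R) (q : nat -> pt) :
  0 < alpha -> alpha < beta ->
  m 1%nat = beta -> m 2%nat = beta -> m 3%nat = alpha -> m 4%nat = alpha ->
  central_configuration m q ->
  convex_cyclic q ->
  rdist (q 1%nat) (q 4%nat) = rdist (q 2%nat) (q 3%nat) ->
  symmetric_isosceles_trapezoid q /\
  parallel (q 1%nat) (q 2%nat) (q 3%nat) (q 4%nat) /\
  rdist (q 1%nat) (q 4%nat) = rdist (q 2%nat) (q 3%nat).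
Proof.
  intros halpha halpha_beta hm1 hm2 hm3 hm4 hcc hconv hlegs.
  destruct (two_pair_balance alpha beta m q halpha ltac:(lra) hm1 hm2 hm3 hm4 hcc)
    as (mu & b1 & b2 & b3 & b4).
  pose proof (legs_parallel alpha beta mu q halpha halpha_beta b1 b2 b3 b4 hconv hlegs) as hpar.
  pose proof (legs_not_parallelogram alpha beta mu q halpha halpha_beta b1 b2 b3 b4 hconv hlegs)
    as hnot.
  split; [apply isosceles_trapezoid_of_parallel|split]; assumption.
Qed.
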